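(* ${\bf KB^\boxdot}$ is strongly complete with respect to the class of symmetric bimodal frames: every ${\bf KB^\boxdot}$-consistent set of $\mathcal{L}(\boxdot)$-formulas is satisfiable at some state of some bimodal model in which both $R_1$ and $R_2$ are symmetric.
   Context: Fix a nonempty set $\mathbf{P}$ of propositional variables. A bimodal model is $\langle S,R_1,R_2,V\rangle$ with $S$ nonempty, $R_1,R_2\subseteq S\times S$, $V:\mathbf{P}\to\mathcal{P}(S)$. $\mathcal{L}(\boxdot):\ \phi::=p\mid\neg\phi\mid(\phi\wedge\phi)\mid\boxdot\phi$. Truth: $\mathcal{M},s\vDash\boxdot\phi$ iff for all $t,u$ with $sR_1t$ and $sR_2u$, ($\mathcal{M},t\vDash\phi\iff\mathcal{M},u\vDash\phi$); atoms and Booleans as usual. ${\bf K^\boxdot}$ has axioms: all instances of propositional tautologies; $\boxdot\top$; $\boxdot\phi\leftrightarrow\boxdot\neg\phi$; $\boxdot\phi\wedge\boxdot\psi\to\boxdot(\phi\wedge\psi)$; $\boxdot\phi\to\boxdot(\phi\vee\psi)\vee\boxdot(\neg\phi\vee\chi)$; rules: modus ponens and RE: from $\phi\leftrightarrow\psi$ infer $\boxdot\phi\leftrightarrow\boxdot\psi$. ${\bf KB^\boxdot}$ is ${\bf K^\boxdot}$ plus the axiom schema $\phi\to\boxdot((\boxdot\phi\wedge\boxdot(\phi\to\psi)\wedge\neg\boxdot\psi)\to\chi)$. A set is consistent if no finite conjunction of its members has a provable negation. *)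

From Stdlib Require Import List.
Import ListNotations.
Set Implicit Arguments.

Inductive form (P : Type) : Type :=
| Var : P -> form P
| Neg : form P -> form P
| And : form P -> form P -> form P
| Dot : form P -> form P.

Arguments Var {P} _.
Arguments Neg {P} _.
Arguments And {P} _ _.
Arguments Dot {P} _.

(* Abbreviations.  Top uses a fixed variable p0 (P is nonempty). *)
Definition Top {P} (p0 : P) : form P := Neg (And (Var p0) (Neg (Var p0))).
Definition Or {P} (a b : form P) : form P := Neg (And (Neg a) (Neg b)).
Definition Imp {P} (a b : form P) : form P := Neg (And a (Neg b)).
Definition Iff {P} (a b : form P) : form P := And (Imp a b) (Imp b a).

(* Propositional tautologies: true under every boolean assignment to the
   propositional atoms and to the boxdot-formulas (treated as atoms). *)
Fixpoint beval {P} (f : form P -> bool) (a : form P) : bool :=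
  match a with
  | Var p => f (Var p)
  | Neg b => negb (beval f b)
  | And b c => andb (beval f b) (beval f c)
  | Dot b => f (Dot b)
  end.

Definition tautology {P} (a : form P) : Prop := forall f, beval f a = true.

Inductive KBprov {P} (p0 : P) : form P -> Prop :=
| ax_taut a : tautology a -> KBprov p0 a
| ax_top : KBprov p0 (Dot (Top p0))
| ax_neg a : KBprov p0 (Iff (Dot a) (Dot (Neg a)))
| ax_and a b : KBprov p0 (Imp (And (Dot a) (Dot b)) (Dot (And a b)))
| ax_or a b c : KBprov p0 (Imp (Dot a) (Or (Dot (Or a b)) (Dot (Or (Neg a) c))))
| ax_B a b c : KBprov p0
    (Imp a (Dot (Imp (And (And (Dot a) (Dot (Imp a b))) (Neg (Dot b))) c)))
| rule_mp a b : KBprov p0 (Imp a b) -> KBprov p0 a -> KBprov p0 b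
| rule_RE a b : KBprov p0 (Iff a b) -> KBprov p0 (Iff (Dot a) (Dot b)).

Fixpoint conj_list {P} (p0 : P) (l : list (form P)) : form P :=
  match l with
  | [] => Top p0
  | a :: l' => And a (conj_list p0 l')
  end.

Definition KB_consistent {P} (p0 : P) (G : form P -> Prop) : Prop :=
  forall l : list (form P), (forall a, In a l -> G a) ->
    ~ KBprov p0 (Neg (conj_list p0 l)).

Record model (P : Type) : Type := {
  st : Type;
  R1 : st -> st -> Prop;
  R2 : st -> st -> Prop;
  val : P -> st -> Prop }.

Fixpoint sat {P} (M : model P) (s : st M) (a : form P) : Prop :=
  match a with
  | Var p => val M p s
  | Neg b => ~ sat M s b
  | And b c => sat M s b /\ sat M s c
  | Dot b => forall t u, R1 M s t -> R2 M s u -> (sat M t b <-> sat M u b)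
  end.

Definition symmetric_rel {S} (R : S -> S -> Prop) : Prop :=
  forall x y, R x y -> R y x.

From Stdlib Require Import List Classical.
Import ListNotations.
From mathcomp Require classical_sets.
Set Implicit Arguments.

(* 1. Maximal consistent sets (mcs) are closed under the axioms and rules; the
      Lindenbaum lemma (via Zorn's lemma) extends every consistent set to one.
   2. For mcs s, t call a "necessary at s" when s contains Dot a and
      Dot (a \/ b) for every b, and let  s E t  mean that t contains every
      formula necessary at s.  Three facts about E drive the truth lemma:
      agreement (if Dot a is in s, all E-successors of s agree on a),
      witnesses (if Dot a is not in s, some E-successor contains a), and
      symmetry (the B axiom makes E symmetric towards successors t that are
      "open", i.e. miss some Dot-formula).
   3. States of the canonical model are pairs (mcs, tag).  R_i relates two
      states that are E-related in some direction; a state whose theory is not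
      open is moreover only R_1-related (tag true) or only R_2-related (tag
      false), so every Dot-formula holds there vacuously.  Both relations are
      symmetric by definition, and the truth lemma yields the theorem. *)

Ltac taut :=
  let f := fresh "f" in
  intro f; unfold Imp, Iff, Or, Top in *; simpl;
  repeat match goal with
  | |- context [beval ?g ?x] => destruct (beval g x)
  | |- context [?g (Dot ?x)] => destruct (g (Dot x))
  | |- context [?g (Var ?x)] => destruct (g (Var x))
  end; reflexivity.

Lemma chain_list_cover {T} (G : T -> Prop) (F : (T -> Prop) -> Prop) :
  (forall X Y, F X -> F Y -> (forall a, X a -> Y a) \/ (forall a, Y a -> X a)) ->
  forall l, (forall a, In a l -> G a \/ exists2 X, F X & X a) ->
  (forall a, In a l -> G a) \/ exists2 X, F X & forall a, In a l -> G a \/ X a.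
Proof.
  intros Htot l. induction l as [|b l IH]; intros Hl.
  - left; intros a [].
  - assert (Hb := Hl b (or_introl eq_refl)).
    destruct IH as [IH|[X FX IH]]; [intros a Ha; apply Hl; right; exact Ha| |].
    + destruct Hb as [Hb|[Y FY Yb]].
      * left. intros a [<-|Ha]; auto.
      * right. exists Y; [exact FY|]. intros a [<-|Ha]; auto.
    + right. destruct Hb as [Hb|[Y FY Yb]].
      * exists X; [exact FX|]. intros a [<-|Ha]; auto.
      * destruct (Htot X Y FX FY) as [XY|YX].
        -- exists Y; [exact FY|]. intros a [<-|Ha]; auto.
           destruct (IH a Ha); auto.
        -- exists X; [exact FX|]. intros a [<-|Ha]; auto.
Qed.

Section Completeness.

Variables (P : Type) (p0 : P).

Notation prov := (KBprov p0).

Lemma prov_taut1 {a b} : tautology (Imp a b) -> prov a -> prov b.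
Proof. intros Ht Ha. exact (rule_mp (ax_taut p0 Ht) Ha). Qed.

Lemma prov_taut2 {a b c} : tautology (Imp a (Imp b c)) -> prov a -> prov b -> prov c.
Proof. intros Ht Ha Hb. exact (rule_mp (prov_taut1 Ht Ha) Hb). Qed.

Lemma prov_taut3 {a b c d} : tautology (Imp a (Imp b (Imp c d))) ->
  prov a -> prov b -> prov c -> prov d.
Proof. intros Ht Ha Hb Hc. exact (rule_mp (prov_taut2 Ht Ha Hb) Hc). Qed.

Lemma extract_formula {M : form P -> Prop} {x : form P} {l : list (form P)} :
  (forall a, In a l -> M a \/ a = x) ->
  exists l', (forall a, In a l' -> M a) /\
    prov (Imp (And x (conj_list p0 l')) (conj_list p0 l)).
Proof.
  induction l as [|b l IH]; intros Hl.
  - exists []. split; [intros a []|]. apply ax_taut. taut.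
  - destruct IH as [l' [H1 H2]]; [intros a Ha; apply Hl; right; exact Ha|].
    destruct (Hl b (or_introl eq_refl)) as [Hb|<-].
    + exists (b :: l'). split; [intros a [<-|Ha]; auto|].
      refine (prov_taut1 _ H2). simpl. taut.
    + exists l'. split; [exact H1|].
      refine (prov_taut1 _ H2). simpl. taut.
Qed.

Lemma conj_list_app l1 l2 :
  prov (Imp (conj_list p0 (l1 ++ l2)) (And (conj_list p0 l1) (conj_list p0 l2))).
Proof.
  induction l1 as [|b l1 IH]; simpl.
  - apply ax_taut. taut.
  - refine (prov_taut1 _ IH). taut.
Qed.

Definition mcs (G : form P -> Prop) : Prop :=
  KB_consistent p0 G /\ forall a, G a \/ G (Neg a).

Section MaximalConsistentSets.

Variable G : form P -> Prop.
Hypothesis HG : mcs G.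

Lemma mcs_prov a : prov a -> G a.
Proof.
  intros Hp. destruct (proj2 HG a) as [H|H]; [exact H|]. exfalso.
  apply (proj1 HG [Neg a]); [intros c [<-|[]]; exact H|].
  refine (prov_taut1 _ Hp). taut.
Qed.

Lemma mcs_mp {a b} : G (Imp a b) -> G a -> G b.
Proof.
  intros H1 H2. destruct (proj2 HG b) as [H|H]; [exact H|]. exfalso.
  apply (proj1 HG [Imp a b; a; Neg b]); [intros c [<-|[<-|[<-|[]]]]; auto|].
  apply ax_taut. taut.
Qed.

Lemma mcs_neg a : G (Neg a) <-> ~ G a.
Proof.
  split.
  - intros H1 H2. apply (proj1 HG [a; Neg a]); [intros c [<-|[<-|[]]]; auto|].
    apply ax_taut. taut.
  - intros H. destruct (proj2 HG a); tauto.
Qed.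

Lemma mcs_taut1 {a b} : tautology (Imp a b) -> G a -> G b.
Proof. intros Ht. apply mcs_mp, mcs_prov, ax_taut, Ht. Qed.

Lemma mcs_taut2 {a b c} : tautology (Imp a (Imp b c)) -> G a -> G b -> G c.
Proof. intros Ht Ha. apply mcs_mp. exact (mcs_taut1 Ht Ha). Qed.

Lemma mcs_and a b : G (And a b) <-> G a /\ G b.
Proof.
  split.
  - intros H; split; refine (mcs_taut1 _ H); taut.
  - intros [H1 H2]; refine (mcs_taut2 _ H1 H2); taut.
Qed.

Lemma mcs_RE {a b} : prov (Iff a b) -> G (Dot a) -> G (Dot b).
Proof.
  intros Hp. apply mcs_mp, mcs_prov.
  refine (prov_taut1 _ (rule_RE Hp)). taut.
Qed.

Lemma mcs_RE_taut {a b} : tautology (Iff a b) -> G (Dot a) -> G (Dot b).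
Proof. intros Ht. apply mcs_RE, ax_taut, Ht. Qed.

Lemma mcs_dot_neg a : G (Dot a) <-> G (Dot (Neg a)).
Proof.
  pose proof (mcs_prov (ax_neg p0 a)) as H.
  split; intro H'; refine (mcs_taut2 _ H H'); taut.
Qed.

Lemma mcs_dot_and {a b} : G (Dot a) -> G (Dot b) -> G (Dot (And a b)).
Proof.
  intros H1 H2. apply (mcs_mp (mcs_prov (ax_and p0 a b))).
  apply mcs_and. split; assumption.
Qed.

Lemma mcs_dot_or {a} b c : G (Dot a) -> G (Dot (Or a b)) \/ G (Dot (Or (Neg a) c)).
Proof.
  intros H1. pose proof (mcs_mp (mcs_prov (ax_or p0 a b c)) H1) as H2.
  destruct (classic (G (Dot (Or a b)))) as [|Hn]; [left; assumption|right].
  apply mcs_neg in Hn. refine (mcs_taut2 _ H2 Hn). taut.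
Qed.

End MaximalConsistentSets.

Lemma maximal_consistent_mcs G : KB_consistent p0 G ->
  (forall a, KB_consistent p0 (fun b => G b \/ b = a) -> G a) -> mcs G.
Proof.
  intros HC Hmax. split; [exact HC|]. intros a.
  apply NNPP. intros Hn. apply not_or_and in Hn as [Ha Hna].
  assert (Inconsistent : forall x, ~ G x -> exists l,
      (forall b, In b l -> G b) /\ prov (Neg (And x (conj_list p0 l)))).
  { intros x Hx. assert (Hc : ~ KB_consistent p0 (fun b => G b \/ b = x))
      by (intro; apply Hx; auto).
    apply not_all_ex_not in Hc as [l Hc].
    apply imply_to_and in Hc as [Hl Hp]. apply NNPP in Hp.
    destruct (extract_formula Hl) as [l' [Hl' Himp]].
    exists l'. split; [exact Hl'|]. refine (prov_taut2 _ Himp Hp). taut. }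
  destruct (Inconsistent a Ha) as [l1 [S1 P1]].
  destruct (Inconsistent (Neg a) Hna) as [l2 [S2 P2]].
  apply (HC (l1 ++ l2)).
  - intros b Hb. apply in_app_or in Hb as [Hb|Hb]; auto.
  - refine (prov_taut3 _ P1 P2 (conj_list_app l1 l2)). taut.
Qed.

Lemma lindenbaum G : KB_consistent p0 G -> exists D, mcs D /\ forall a, G a -> D a.
Proof.
  intros HG.
  destruct (@classical_sets.Zorn_bigcup (form P)
     (fun X => KB_consistent p0 (fun a => G a \/ X a))) as [A [HA Hmax]].
  - intros F HF Htot l Hl.
    destruct (chain_list_cover G F Htot l Hl) as [K|[X FX K]].
    + exact (HG l K).
    + exact (HF X FX l K).
  - exists (fun a => G a \/ A a). split; [|auto].
    apply maximal_consistent_mcs; [exact HA|].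
    intros a Ha. right. apply NNPP. intros Hn.
    apply (Hmax (fun b => A b \/ b = a)).
    + split; [intros t Ht; auto|]. intros Hs. apply Hn. apply Hs. auto.
    + intros l Hl. apply (Ha l). intros b Hb. destruct (Hl b Hb) as [|[|]]; auto.
Qed.

Definition necessary (s : form P -> Prop) (a : form P) : Prop :=
  s (Dot a) /\ forall b, s (Dot (Or a b)).

Definition canon_rel (s t : form P -> Prop) : Prop :=
  forall a, necessary s a -> t a.

Definition open_theory (s : form P -> Prop) : Prop := exists c, ~ s (Dot c).

Section Necessity.

Variable s : form P -> Prop.
Hypothesis Hs : mcs s.

Lemma necessary_top : necessary s (Top p0).
Proof.
  assert (Htop := mcs_prov Hs (ax_top p0)).
  split; [exact Htop|]. intros b. refine (mcs_RE_taut Hs _ Htop). taut.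
Qed.

Lemma necessary_and {a b} : necessary s a -> necessary s b -> necessary s (And a b).
Proof.
  intros [A1 A2] [B1 B2]. split.
  - exact (mcs_dot_and Hs A1 B1).
  - intros c. refine (mcs_RE_taut Hs _ (mcs_dot_and Hs (A2 c) (B2 c))). taut.
Qed.

Lemma necessary_mono {a b} : necessary s a -> prov (Imp a b) -> necessary s b.
Proof.
  intros [_ A2] Hp. split.
  - refine (mcs_RE Hs _ (A2 b)). refine (prov_taut1 _ Hp). taut.
  - intros c. refine (mcs_RE Hs _ (A2 (Or b c))). refine (prov_taut1 _ Hp). taut.
Qed.

Lemma necessary_conj_list {l} :
  (forall a, In a l -> necessary s a) -> necessary s (conj_list p0 l).
Proof.
  induction l as [|b l IH]; intros Hl; simpl.
  - exact necessary_top.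
  - apply necessary_and; [apply Hl; left; reflexivity|].
    apply IH. intros a Ha; apply Hl; right; exact Ha.
Qed.

(* Agreement: all E-successors of s agree on any a with Dot a in s, because
   either a or its negation is necessary at s. *)
Lemma canon_agree {t u a} : mcs t -> mcs u ->
  s (Dot a) -> canon_rel s t -> canon_rel s u -> (t a <-> u a).
Proof.
  intros Ht Hu Ha Et Eu.
  destruct (classic (forall b, s (Dot (Or a b)))) as [Hall|Hn].
  - assert (N : necessary s a) by (split; assumption).
    split; intros _; auto.
  - apply not_all_ex_not in Hn as [b Hb].
    assert (N : necessary s (Neg a)).
    { split; [exact (proj1 (mcs_dot_neg Hs a) Ha)|].
      intros c. destruct (mcs_dot_or Hs b c Ha); tauto. }
    pose proof (proj1 (mcs_neg Ht a) (Et _ N)).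
    pose proof (proj1 (mcs_neg Hu a) (Eu _ N)).
    tauto.
Qed.

(* Witnesses: if Dot a is not in s, then a is consistent with the formulas
   necessary at s, so some E-successor of s contains a. *)
Lemma canon_witness {a} : ~ s (Dot a) -> exists t, mcs t /\ canon_rel s t /\ t a.
Proof.
  intros Hna.
  destruct (lindenbaum (G := fun b => necessary s b \/ b = a)) as [t [Ht Hsub]].
  - intros l Hl Hp.
    destruct (extract_formula Hl) as [l' [H1 H2]].
    assert (Himp : prov (Imp (conj_list p0 l') (Neg a)))
      by (refine (prov_taut2 _ H2 Hp); taut).
    destruct (necessary_mono (necessary_conj_list H1) Himp) as [Hdot _].
    exact (Hna (proj2 (mcs_dot_neg Hs a) Hdot)).
  - exists t. split; [exact Ht|]. split; [intros b Hb|]; apply Hsub; auto.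
Qed.

(* Symmetry: by the B axiom, an E-successor t of s that is open sees s back. *)
Lemma canon_sym {t} : mcs t -> canon_rel s t -> open_theory t -> canon_rel t s.
Proof.
  intros Ht E [c Hc] a [Na1 Na2].
  apply NNPP. intro Hna. apply (mcs_neg Hs) in Hna.
  pose (X := And (And (Dot (Neg a)) (Dot (Imp (Neg a) c))) (Neg (Dot c))).
  assert (NX : necessary s (Neg X)).
  { pose proof (fun d => mcs_mp Hs (mcs_prov Hs (ax_B p0 (Neg a) c d)) Hna) as B.
    split.
    - refine (mcs_RE_taut Hs _ (B (Neg (Top p0)))). unfold X. taut.
    - intros d. refine (mcs_RE_taut Hs _ (B d)). unfold X. taut. }
  apply (proj1 (mcs_neg Ht X) (E _ NX)). unfold X.
  apply (mcs_and Ht). split; [apply (mcs_and Ht); split|].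
  - exact (proj1 (mcs_dot_neg Ht a) Na1).
  - exact (Na2 c).
  - apply (mcs_neg Ht). exact Hc.
Qed.

End Necessity.

Definition cstate : Type := ({s : form P -> Prop | mcs s} * bool)%type.

Definition thy (x : cstate) : form P -> Prop := proj1_sig (fst x).

Lemma thy_mcs (x : cstate) : mcs (thy x).
Proof. exact (proj2_sig (fst x)). Qed.

Definition crel (b : bool) (x y : cstate) : Prop :=
  (canon_rel (thy x) (thy y) \/ canon_rel (thy y) (thy x)) /\
  (open_theory (thy x) \/ snd x = b) /\
  (open_theory (thy y) \/ snd y = b).

Definition cmodel : model P := {|
  st := cstate;
  R1 := crel true;
  R2 := crel false;
  val := fun p x => thy x (Var p) |}.

Lemma crel_sym b : symmetric_rel (crel b).
Proof. intros x y H. unfold crel in *. tauto. Qed.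

Lemma crel_open {x y z} : crel true x y -> crel false x z -> open_theory (thy x).
Proof.
  intros [_ [[|Hy] _]] [_ [[|Hz] _]]; auto. congruence.
Qed.

Lemma crel_forward {b x y} :
  open_theory (thy x) -> crel b x y -> canon_rel (thy x) (thy y).
Proof.
  intros Hx [[E|E] _]; [exact E|].
  exact (canon_sym (thy_mcs y) (thy_mcs x) E Hx).
Qed.

Lemma crel_witness (b : bool) {x t a} (Ht : mcs t) :
  ~ thy x (Dot a) -> canon_rel (thy x) t -> crel b x (exist _ t Ht, b).
Proof.
  intros Ha E. split; [left; exact E|].
  split; [left; exists a; exact Ha|right; reflexivity].
Qed.

Lemma truth_lemma a : forall x : cstate, sat cmodel x a <-> thy x a.
Proof.
  induction a as [p|a IH|a IHa b IHb|a IH]; intros x; simpl.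
  - reflexivity.
  - rewrite IH. symmetry. exact (mcs_neg (thy_mcs x) a).
  - rewrite IHa, IHb. symmetry. exact (mcs_and (thy_mcs x) a b).
  - assert (Hx := thy_mcs x). split.
    + intros H. apply NNPP. intros Hn.
      destruct (canon_witness Hx Hn) as [t1 [Ht1 [E1 T1]]].
      assert (Hn' : ~ thy x (Dot (Neg a))) by (rewrite <- (mcs_dot_neg Hx); exact Hn).
      destruct (canon_witness Hx Hn') as [t2 [Ht2 [E2 T2]]].
      specialize (H _ _ (crel_witness true Ht1 Hn E1) (crel_witness false Ht2 Hn E2)).
      rewrite !IH in H. simpl in H.
      exact (proj1 (mcs_neg Ht2 a) T2 (proj1 H T1)).
    + intros H y z Hy Hz. rewrite !IH.
      assert (Ho := crel_open Hy Hz).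
      exact (canon_agree Hx (thy_mcs y) (thy_mcs z) H
               (crel_forward Ho Hy) (crel_forward Ho Hz)).
Qed.

End Completeness.

Theorem mainTheorem16 (P : Type) (p0 : P) (G : form P -> Prop) :
  KB_consistent p0 G ->
  exists (M : model P) (s : st M),
    symmetric_rel (R1 M) /\ symmetric_rel (R2 M) /\
    (forall a, G a -> sat M s a).
Proof.
  intros HG. destruct (lindenbaum HG) as [D [HD HGD]].
  exists (cmodel p0), (exist _ D HD, true).
  split; [apply crel_sym|]. split; [apply crel_sym|].
  intros a Ha. apply truth_lemma. exact (HGD a Ha).
Qed.
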